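(* Let $(G,\cdot)$ be a finite group and let $\psi\in\operatorname{End}(G,\cdot)$ be non-trivial and idempotent ($\psi\circ\psi=\psi$) with $\psi([[G,\psi],G])\le Z(G,\cdot)$. Let $N=\{h\mapsto g\,\psi(g)^{-1}h\,\psi(g) : g\in G\}\le\operatorname{Perm}(G)$. Then $N\cong(\ker\psi,\cdot)\times(\psi(G),\cdot)$.
   Context: $\operatorname{Perm}(G)$ is the group of permutations of the set $G$. For $\psi\in\operatorname{End}(G,\cdot)$, $[g,\psi]=g\cdot\psi(g)^{-1}$ and $[G,\psi]$ is the subgroup generated by these elements; $[x,y]=xyx^{-1}y^{-1}$ and $[A,B]$ is the subgroup generated by $[a,b]$, $a\in A,b\in B$; $Z(G,\cdot)$ is the centre. *)

From mathcomp Require Import all_boot all_fingroup all_solvable.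
Set Implicit Arguments. Unset Strict Implicit. Unset Printing Implicit Defensive.
Import GroupScope.
Local Open Scope group_scope.

Section Defs.
Variable gT : finGroupType.

(* paper's commutator convention: [x,y] = x y x^-1 y^-1 *)
Definition pcomm (x y : gT) : gT := x * y * x^-1 * y^-1.

Definition pcommg (A B : {set gT}) : {set gT} :=
  <<[set pcomm a b | a in A, b in B]>>.

Definition commpsi (G : {set gT}) (psi : gT -> gT) : {set gT} :=
  <<[set g * (psi g)^-1 | g in G]>>.

Definition nmap (psi : gT -> gT) (g : gT) (h : gT) : gT :=
  g * (psi g)^-1 * h * psi g.

Lemma nmap_inj psi g : injective (nmap psi g).
Proof. by move=> x y; rewrite /nmap => /mulIg /mulgI. Qed.

Definition nperm (psi : gT -> gT) (g : gT) : {perm gT} := perm (@nmap_inj psi g).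

Definition Nset (psi : gT -> gT) : {set {perm gT}} :=
  [set nperm psi g | g in [set: gT]].
End Defs.

From mathcomp Require Import all_boot all_fingroup all_solvable.
Import GroupScope.
Set Implicit Arguments. Unset Strict Implicit. Unset Printing Implicit Defensive.
Local Open Scope group_scope.

(* The direct product G x G acts on the set G by two-sided
   multiplication, (a, b) : h |-> a^-1 h b; this gives a morphism
   [dperm] from G x G to Perm(G).  The map h |-> g psi(g)^-1 h psi(g) is the
   image of the pair (psi(g) g^-1, psi(g)), whose first component lies in
   ker psi and second in psi(G).  Since psi is idempotent, every element
   factors as g = (g psi(g)^-1) psi(g) through ker psi and psi(G), so N is
   exactly the image of ker psi x psi(G) under [dperm].  Finally [dperm] is
   injective on any product A x B of subgroups with A :&: B = 1, and
   ker psi :&: psi(G) = 1 because psi fixes its image pointwise. *)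

Section TwoSidedAction.
Variable gT : finGroupType.

Lemma dperm_inj (x : gT * gT) : injective (fun h => x.1^-1 * h * x.2).
Proof. by move=> a b /mulIg /mulgI. Qed.

Definition dperm (x : gT * gT) : {perm gT} := perm (@dperm_inj x).

Lemma dpermE (x : gT * gT) (h : gT) : dperm x h = x.1^-1 * h * x.2.
Proof. by rewrite permE. Qed.

Lemma dpermM : {in [set: gT * gT] &, {morph dperm : x y / x * y}}.
Proof.
move=> [a1 b1] [a2 b2] _ _; apply/permP => h.
by rewrite permM !dpermE /= invMg !mulgA.
Qed.

Canonical dperm_morphism := Morphism dpermM.

(* The action is faithful on A x B as soon as A and B meet trivially: equal
   permutations agree at 1, which forces the two pairs to differ by a common
   element of A :&: B. *)
Lemma injm_dperm (A B : {group gT}) (sABT : setX A B \subset [set: gT * gT]) :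
  A :&: B = 1 -> 'injm (restrm sABT dperm_morphism).
Proof.
move=> tiAB; apply/injmP => [[a1 b1] [a2 b2]] /setXP [a1A b1B] /setXP [a2A b2B].
move=> /(congr1 (fun p : {perm gT} => p 1)); rewrite /= !dpermE /= !mulg1 => eq1.
have eq_diff : a2 * a1^-1 = b2 * b1^-1.
  by rewrite -[b2](mulKVg a2) -eq1 !mulgA mulgK.
have : a2 * a1^-1 \in A :&: B by rewrite inE groupM ?groupV // eq_diff groupM ?groupV.
rewrite tiAB inE -eq_mulgV1 => /eqP a21.
by move: eq_diff; rewrite a21 mulgV => /esym/eqP; rewrite -eq_mulgV1 => /eqP ->.
Qed.

End TwoSidedAction.

Section IdempotentEndomorphism.
Variables (gT : finGroupType) (psi : {morphism [set: gT] >-> gT}).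
Hypothesis idem : forall g : gT, psi (psi g) = psi g.

Lemma idem_fix_im {a : gT} : a \in psi @* [set: gT] -> psi a = a.
Proof. by case/morphimP=> b _ _ ->; rewrite idem. Qed.

Lemma idem_ker_im_trivial : 'ker psi :&: psi @* [set: gT] = 1.
Proof.
apply/trivgP/subsetP => c /setIP [cK cH].
by rewrite inE -(idem_fix_im cH) (mker cK).
Qed.

(* psi(g) g^-1 lies in the kernel, so g = (psi(g) g^-1)^-1 psi(g) splits g
   along ker psi and psi(G). *)
Lemma idem_ker_part (g : gT) : psi g * g^-1 \in 'ker psi.
Proof.
by apply/kerP; rewrite ?inE // morphM ?inE // morphV ?inE // idem mulgV.
Qed.

Lemma nperm_dperm (g : gT) : nperm psi g = dperm (psi g * g^-1, psi g).
Proof. by apply/permP => h; rewrite !permE /nmap /= invMg invgK. Qed.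

Lemma Nset_morphim :
  Nset psi = dperm_morphism gT @* setX ('ker psi) (psi @* [set: gT]).
Proof.
apply/setP => p; apply/imsetP/morphimP.
- move=> [g _ ->]; exists (psi g * g^-1, psi g); first by rewrite inE.
    by apply/setXP; split; [exact: idem_ker_part | rewrite mem_morphim ?inE].
  exact: nperm_dperm.
- move=> [[k a] _ /setXP [kK aH] ->]; exists (k^-1 * a); first by rewrite inE.
  have psi_ka : psi (k^-1 * a) = a.
    by rewrite morphM ?inE // morphV ?inE // (mker kK) invg1 mul1g idem_fix_im.
  by rewrite nperm_dperm psi_ka invMg invgK mulgA mulgV mul1g.
Qed.

End IdempotentEndomorphism.

Theorem mainTheorem10 (gT : finGroupType)
  (psi : {morphism [set: gT] >-> gT})
  (nontriv : exists g : gT, psi g != 1)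
  (idem : forall g : gT, psi (psi g) = psi g)
  (hcent : psi @* pcommg (commpsi [set: gT] psi) [set: gT] \subset 'Z([set: gT])) :
  group_set (Nset psi) /\
  Nset psi \isog setX ('ker psi) (psi @* [set: gT]).
Proof.
have sXT : setX ('ker psi) (psi @* [set: gT]) \subset [set: gT * gT].
  exact: subsetT.
have injD := injm_dperm sXT (idem_ker_im_trivial idem).
have eqN : Nset psi = restrm sXT (dperm_morphism gT) @* setX ('ker psi) (psi @* [set: gT]).
  by rewrite morphim_restrm setIid Nset_morphim.
split; first by rewrite eqN groupP.
by rewrite eqN isog_sym sub_isog.
Qed.
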